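(* Let $n=2k$ and let $X\subset\mathbb{P}^{n-1}_\mathbb{C}$ be the smooth quadric $\sum_{j=1}^k z_{2j-1}z_{2j}=0$, with the action of $T=(S^1)^k$ (restricted from $T_\mathbb{C}=(\mathbb{C}^* )^k$) given by $t\cdot(z_1:\dots:z_n)=(t_1z_1:t_1^{-1}z_2:\dots:t_kz_{2k-1}:t_k^{-1}z_{2k})$, moment map \[\mu(z_1:\dots:z_n)=\frac{1}{\sum_{i=1}^n|z_i|^2}\sum_{j=1}^k(|z_{2j-1}|^2-|z_{2j}|^2)e_j,\] and $P=\mu(X)=\mathrm{conv}(\pm e_1,\dots,\pm e_k)$. Let $q\colon\mathbb{P}^{n-1}_\mathbb{C}\dashrightarrow\mathbb{P}^{k-2}_\mathbb{C}$ be the rational map $(z_1:\dots:z_n)\mapsto(z_3z_4:\dots:z_{n-1}z_n)$. Then for every $u$ in the interior $P^\circ$ of $P$, $q$ is defined on $\mu^{-1}(u)\cap X$ and $q|_{\mu^{-1}(u)}\colon\mu^{-1}(u)\to\mathbb{P}^{k-2}_\mathbb{C}$ is a quotient map to the $T$-orbit space of the fibre, i.e. two points of $\mu^{-1}(u)$ have the same image under $q$ if and only if they lie in the same $T$-orbit.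
   Context: $e_j$ denotes the $j$-th standard basis vector of $\mathbb{R}^k$. *)

From HB Require Import structures.
From mathcomp Require Import all_boot all_order all_algebra.
From mathcomp Require Import all_classical all_reals all_analysis.
From mathcomp Require Import complex.
Set Implicit Arguments. Unset Strict Implicit. Unset Printing Implicit Defensive.
Import Order.TTheory GRing.Theory Num.Theory.
Import numFieldNormedType.Exports.
Local Open Scope ring_scope.
Local Open Scope classical_set_scope.

(* Coordinates of C^(2K) are grouped in pairs: z j = (z_{2j-1}, z_{2j}),
   for j : 'I_K (0-based, j = 0 corresponds to the pair (z_1, z_2)). *)
Definition cvec (R : realType) (K : nat) := 'I_K -> (R[i] * R[i])%type.

Definition sqn (R : realType) (c : R[i]) : R := (complex.Re c) ^+ 2 + (complex.Im c) ^+ 2.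

Definition nonzero (R : realType) K (z : cvec R K) : Prop :=
  exists j, (z j).1 != 0 \/ (z j).2 != 0.

Definition inX (R : realType) K (z : cvec R K) : Prop :=
  \sum_(j < K) (z j).1 * (z j).2 = 0.

Definition normsq (R : realType) K (z : cvec R K) : R :=
  \sum_(j < K) (sqn (z j).1 + sqn (z j).2).

Definition mu (R : realType) K (z : cvec R K) : 'rV[R]_K :=
  \row_(j < K) ((sqn (z j).1 - sqn (z j).2) / normsq z).

Definition e_ {R : realType} {K} (j : 'I_K) : 'rV[R]_K := delta_mx 0 j.

Definition Pcross (R : realType) K : set 'rV[R]_K :=
  [set u | exists (a b : 'I_K -> R),
      (forall j, 0 <= a j) /\ (forall j, 0 <= b j) /\
      \sum_(j < K) (a j + b j) = 1 /\
      u = \sum_(j < K) (a j *: e_ j + b j *: (- e_ j))].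

(* the fibre mu^{-1}(u) /\ X, as a set of representing vectors *)
Definition in_fibre (R : realType) K (u : 'rV[R]_K) (z : cvec R K) : Prop :=
  nonzero z /\ inX z /\ mu z = u.

Definition torus (R : realType) K (t : 'I_K -> R[i]) : Prop :=
  forall j, sqn (t j) = 1.

Definition act (R : realType) K (t : 'I_K -> R[i]) (z : cvec R K) : cvec R K :=
  fun j => (t j * (z j).1, (t j)^-1 * (z j).2).

Definition same_orbit (R : realType) K (z w : cvec R K) : Prop :=
  exists t, torus t /\ exists lam : R[i], lam != 0 /\
    forall j, w j = ((lam * (act t z j).1), (lam * (act t z j).2)).

(* the rational map q : P^(n-1) --> P^(k-2), for k = k'.+2,
   (z_1 : ... : z_n) |-> (z_3 z_4 : ... : z_(n-1) z_n) *)
Definition q (R : realType) k' (z : cvec R k'.+2) : 'I_k'.+1 -> R[i] :=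
  fun j => (z (lift ord0 j)).1 * (z (lift ord0 j)).2.

Definition q_defined (R : realType) k' (z : cvec R k'.+2) : Prop :=
  exists j, q z j != 0.

Definition same_q_image (R : realType) k' (z w : cvec R k'.+2) : Prop :=
  exists lam : R[i], lam != 0 /\ forall j, q w j = lam * q z j.

From HB Require Import structures.
From mathcomp Require Import all_boot all_order all_algebra.
From mathcomp Require Import all_classical all_reals all_analysis.
From mathcomp Require Import complex.
From mathcomp Require Import ring lra.
Set Implicit Arguments. Unset Strict Implicit. Unset Printing Implicit Defensive.
Import Order.TTheory GRing.Theory Num.Theory.
Import numFieldNormedType.Exports.
Local Open Scope ring_scope.
Local Open Scope classical_set_scope.

(* On the fibre of mu over u, |z_(2j-1)|^2 - |z_(2j)|^2 = u_j N with N = |z|^2.  If q were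
   undefined at z, the quadric equation would kill every pair product z_(2j-1) z_(2j); then
   |u_j| N = |z_(2j-1)|^2 + |z_(2j)|^2 for all j, so sum_j |u_j| = 1 and u is on the boundary
   of P.  If q(w) = lam q(z), rescaling z by sqrt(lam) makes all pair products of z and w
   equal (the first one by the quadric equation).  The moduli of the coordinates are then
   determined by the products, by u and by N, and N itself is forced by a contraction
   argument that uses sum_j |u_j| < 1.  Two pairs with the same moduli and the same product
   differ by (t, t^-1) with |t| = 1, which is the torus action. *)

Section SquaredModulus.
Variable R : realType.
Implicit Types x y : R[i].

Lemma sqnM x y : sqn (x * y) = sqn x * sqn y.
Proof. by case: x => a b; case: y => c d; rewrite /sqn /=; ring. Qed.

Lemma sqn1 : sqn (1 : R[i]) = 1.
Proof. by rewrite /sqn /=; ring. Qed.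

Lemma sqn_ge0 x : 0 <= sqn x.
Proof. by case: x => a b; rewrite /sqn /=; nra. Qed.

Lemma sqn_eq0 x : (sqn x == 0) = (x == 0).
Proof.
case: x => a b; rewrite /sqn /= paddr_eq0 ?sqr_ge0 // !sqrf_eq0.
by apply/andP/eqP => [[/eqP -> /eqP ->] | [-> ->]].
Qed.

Lemma sqn_gt0 x : (0 < sqn x) = (x != 0).
Proof. by rewrite lt_def sqn_eq0 sqn_ge0 andbT. Qed.

Lemma sqn0 : sqn (0 : R[i]) = 0.
Proof. by apply/eqP; rewrite sqn_eq0. Qed.

Lemma sqnV x : sqn x^-1 = (sqn x)^-1.
Proof.
have [->|x0] := eqVneq x 0; first by rewrite invr0 sqn0 invr0.
have sx0 : sqn x != 0 by rewrite sqn_eq0.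
by apply: (mulfI sx0); rewrite -sqnM !mulfV // sqn1.
Qed.

Lemma sqn_div_eq1 x y : y != 0 -> sqn x = sqn y -> sqn (x / y) = 1.
Proof. by move=> y0 exy; rewrite sqnM sqnV exy mulfV // sqn_eq0. Qed.

Lemma torus_pair_of_sqn_mul x1 x2 y1 y2 :
  sqn y1 = sqn x1 -> sqn y2 = sqn x2 -> y1 * y2 = x1 * x2 ->
  exists2 t, sqn t = 1 & y1 = t * x1 /\ y2 = t^-1 * x2.
Proof.
move=> e1 e2 e12.
have [x1_0|x1_0] := eqVneq x1 0.
  have y1_0 : y1 = 0 by apply/eqP; rewrite -sqn_eq0 e1 x1_0 sqn0.
  have [x2_0|x2_0] := eqVneq x2 0.
    have y2_0 : y2 = 0 by apply/eqP; rewrite -sqn_eq0 e2 x2_0 sqn0.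
    by exists 1; rewrite ?sqn1 // x1_0 x2_0 y1_0 y2_0 !mulr0.
  have y2_0 : y2 != 0 by rewrite -sqn_eq0 e2 sqn_eq0.
  exists (x2 / y2); first exact: sqn_div_eq1.
  by rewrite x1_0 y1_0 mulr0 invf_div divfK.
have y1_0 : y1 != 0 by rewrite -sqn_eq0 e1 sqn_eq0.
exists (y1 / x1); first exact: sqn_div_eq1.
split; first by rewrite divfK.
by apply: (mulfI y1_0); rewrite e12 invf_div; field.
Qed.

End SquaredModulus.

Section RealEstimates.
Variable R : realFieldType.

Lemma hypot_sub_le (s s' x y c : R) : 0 <= s -> 0 <= s' -> 0 <= c ->
  s ^+ 2 = x ^+ 2 + c -> s' ^+ 2 = y ^+ 2 + c -> `|s - s'| <= `|x - y|.
Proof.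
move=> s0 s'0 c0 es es'.
have xy_le : x * y + c <= s * s'.
  have : (x * y + c) ^+ 2 <= (s * s') ^+ 2
    by rewrite exprMn es es'; have := mulr_ge0 c0 (sqr_ge0 (x - y)); nra.
  have := mulr_ge0 s0 s'0; nra.
rewrite -ler_sqr ?nnegrE // !real_normK ?num_real //; nra.
Qed.

(* a_j + b_j = sqrt ((u_j N)^2 + 4 a_j b_j), so N = sum_j (a_j + b_j) is a fixed point of
   a map with Lipschitz constant sum_j |u_j| < 1. *)
Lemma eq_pairs_of_sub_mul K (u a b a' b' : 'I_K -> R) :
  \sum_j `|u j| < 1 ->
  (forall j, [/\ 0 <= a j, 0 <= b j, 0 <= a' j & 0 <= b' j]) ->
  (forall j, a j - b j = u j * \sum_i (a i + b i)) ->
  (forall j, a' j - b' j = u j * \sum_i (a' i + b' i)) ->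
  (forall j, a j * b j = a' j * b' j) ->
  forall j, a j = a' j /\ b j = b' j.
Proof.
move=> u_lt1 ge0 ab a'b' abM.
set N := \sum_i (a i + b i) in ab *; set N' := \sum_i (a' i + b' i) in a'b' *.
have dist_le j : `|(a j + b j) - (a' j + b' j)| <= `|u j| * `|N - N'|.
  have [a0 b0 a0' b0'] := ge0 j; rewrite -normrM mulrBr -ab -a'b'.
  apply: (@hypot_sub_le _ _ _ _ (4 * (a j * b j))); [lra | lra | nra | ring |].
  by rewrite abM; ring.
have NN' : N = N'.
  have contract : `|N - N'| <= (\sum_j `|u j|) * `|N - N'|.
    have sumB : N - N' = \sum_i (a i + b i - (a' i + b' i)) by rewrite sumrB.
    rewrite {1}sumB mulr_suml; apply: le_trans (ler_norm_sum _ _ _) _.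
    by apply: ler_sum => j _; apply: dist_le.
  have : `|N - N'| = 0 by have := normr_ge0 (N - N'); nra.
  by move/eqP; rewrite normr_eq0 subr_eq0 => /eqP.
move=> j; have := dist_le j; rewrite NN' subrr normr0 mulr0 normr_le0 subr_eq0.
by move=> /eqP; have := ab j; have := a'b' j; rewrite NN'; lra.
Qed.

End RealEstimates.

Lemma Pcross_sum_abs_le1 (R : realType) K (v : 'rV[R]_K) :
  Pcross v -> \sum_j `|v 0 j| <= 1.
Proof.
move=> [a [b [a0 [b0 [<- ->]]]]]; apply: ler_sum => j _.
have -> : (\sum_i (a i *: e_ i + b i *: - e_ i)) 0 j = a j - b j.
  rewrite summxE (bigD1 j) //= big1 => [|i ij]; rewrite !mxE /= ?eqxx.
    by rewrite addr0 mulr1 mulrN1.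
  by rewrite eq_sym (negbTE ij) mulr0n oppr0 !mulr0 addr0.
by have := a0 j; have := b0 j; rewrite ler_norml; lra.
Qed.

Lemma interior_Pcross_sum_abs_lt1 (R : realType) K (u : 'rV[R]_K.+1) :
  interior (@Pcross R K.+1) u -> \sum_j `|u 0 j| < 1.
Proof.
move=> u_int.
pose s : R := if 0 <= u 0 ord0 then 1 else -1.
pose g (h : R) := u + h *: (s *: e_ ord0).
have sum_g h : 0 <= h -> \sum_j `|g h 0 j| = \sum_j `|u 0 j| + h.
  move=> h0; rewrite !big_ord_recl addrAC; congr (_ + _).
    rewrite !mxE /= mulr1 /s; case: ifP => [u0|/negbT]; rewrite ?mulr1 ?mulrN1.
      by rewrite !ger0_norm // addr_ge0.
    by rewrite -ltNge => u0; rewrite !ltr0_norm ?opprD //; lra.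
  by apply: eq_bigr => i _; rewrite !mxE /= !mulr0 addr0.
have g_cvg : g h @[h --> 0] --> u.
  have -> : u = g 0 by rewrite /g scale0r addr0.
  by apply: cvgD; [exact: cvg_cst | apply: cvgZr_tmp; exact: cvg_id].
have /nbhs_ballP[e /= e0 ball_Pcross] : \forall h \near 0, Pcross (g h).
  exact: g_cvg.
have /Pcross_sum_abs_le1 : Pcross (g (e / 2)).
  by apply: ball_Pcross; rewrite /ball /= sub0r normrN ger0_norm; lra.
by rewrite sum_g; lra.
Qed.

Section Fibre.
Variables (R : realType) (K : nat).
Implicit Types (u : 'rV[R]_K) (z w : cvec R K) (s : R[i]).

Lemma normsq_gt0 z : nonzero z -> 0 < normsq z.
Proof.
move=> [j zj]; rewrite /normsq (bigD1 j) //=.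
have rest_ge0 : 0 <= \sum_(i < K | i != j) (sqn (z i).1 + sqn (z i).2).
  by apply: sumr_ge0 => i _; rewrite addr_ge0 ?sqn_ge0.
have := sqn_ge0 (z j).1; have := sqn_ge0 (z j).2.
by case: zj; rewrite -sqn_gt0; lra.
Qed.

Lemma in_fibre_sqn_sub u z : in_fibre u z ->
  forall j, sqn (z j).1 - sqn (z j).2 = u 0 j * normsq z.
Proof. by move=> [/normsq_gt0 N0 [_ <-]] j; rewrite mxE divfK ?gt_eqF. Qed.

Definition scalev s z : cvec R K := fun j => (s * (z j).1, s * (z j).2).

Lemma normsq_scalev s z : normsq (scalev s z) = sqn s * normsq z.
Proof.
by rewrite /normsq mulr_sumr; apply: eq_bigr => j _ /=; rewrite mulrDr -!sqnM.
Qed.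

Lemma in_fibre_scalev u s z : s != 0 -> in_fibre u z -> in_fibre u (scalev s z).
Proof.
move=> s0 [[i zi] [zX <-]]; split; [|split].
- by exists i; rewrite /= !mulf_eq0 (negbTE s0).
- rewrite /inX /=; under eq_bigr do rewrite mulrACA.
  by rewrite -mulr_sumr zX mulr0.
- apply/rowP => j; rewrite !mxE normsq_scalev /= !sqnM -mulrBr -mulf_div.
  by rewrite mulfV ?mul1r // sqn_eq0.
Qed.

Lemma sqn_eq_of_pair_mul u z w : \sum_j `|u 0 j| < 1 ->
  in_fibre u z -> in_fibre u w ->
  (forall j, (w j).1 * (w j).2 = (z j).1 * (z j).2) ->
  forall j, sqn (w j).1 = sqn (z j).1 /\ sqn (w j).2 = sqn (z j).2.
Proof.
move=> u_lt1 /in_fibre_sqn_sub zE /in_fibre_sqn_sub wE zwM.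
apply: (@eq_pairs_of_sub_mul _ _ (fun j => u 0 j)
  (fun j => sqn (w j).1) (fun j => sqn (w j).2)
  (fun j => sqn (z j).1) (fun j => sqn (z j).2)) => // j.
- by split; apply: sqn_ge0.
- by rewrite -!sqnM zwM.
Qed.

Lemma torus_act_of_pair_mul u z w : \sum_j `|u 0 j| < 1 ->
  in_fibre u z -> in_fibre u w ->
  (forall j, (w j).1 * (w j).2 = (z j).1 * (z j).2) ->
  exists2 t, torus t & forall j, w j = act t z j.
Proof.
move=> u_lt1 zF wF zwM.
have /fin_all_exists[t tP] : forall j, exists t,
    sqn t = 1 /\ (w j).1 = t * (z j).1 /\ (w j).2 = t^-1 * (z j).2.
  move=> j; have [e1 e2] := sqn_eq_of_pair_mul u_lt1 zF wF zwM j.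
  by have [t t1 tE] := torus_pair_of_sqn_mul e1 e2 (zwM j); exists t.
exists t => j; first by case: (tP j).
by case: (tP j) => _ [e1 e2]; rewrite /act -e1 -e2 -surjective_pairing.
Qed.

Lemma sum_abs_eq1_of_pair_mul0 u z : in_fibre u z ->
  (forall j, (z j).1 * (z j).2 = 0) -> \sum_j `|u 0 j| = 1.
Proof.
move=> zF zM; have N0 := normsq_gt0 zF.1.
have termE j : `|u 0 j| * normsq z = sqn (z j).1 + sqn (z j).2.
  rewrite -[normsq z]ger0_norm ?ltW // -normrM -(in_fibre_sqn_sub zF).
  move/eqP: (zM j); rewrite mulf_eq0 => /orP[]/eqP->; rewrite sqn0.
    by rewrite sub0r normrN add0r ger0_norm ?sqn_ge0.
  by rewrite subr0 addr0 ger0_norm ?sqn_ge0.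
apply: (mulIf (lt0r_neq0 N0)); rewrite mul1r mulr_suml [RHS]/normsq.
by apply: eq_bigr => j _; apply: termE.
Qed.

End Fibre.

Lemma pair_mul_of_q (R : realType) k' (z w : cvec R k'.+2) (lam : R[i]) :
  inX z -> inX w -> (forall j, q w j = lam * q z j) ->
  forall j, (w j).1 * (w j).2 = lam * ((z j).1 * (z j).2).
Proof.
rewrite /inX !(big_ord_recl k'.+1) => /eqP + /eqP + qE j.
rewrite !addr_eq0 => /eqP zX /eqP wX; case: (unliftP ord0 j) => [i ->|->].
  exact: qE.
by rewrite zX wX mulrN mulr_sumr; congr (- _); apply: eq_bigr => i _; apply: qE.
Qed.

Theorem lemma3p3 (R : realType) (k' : nat) (u : 'rV[R]_k'.+2) :
  interior (@Pcross R k'.+2) u ->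
  (forall z : cvec R k'.+2, in_fibre u z -> q_defined z) /\
  (forall z w : cvec R k'.+2, in_fibre u z -> in_fibre u w ->
     (same_q_image z w <-> same_orbit z w)).
Proof.
move=> /interior_Pcross_sum_abs_lt1 u_lt1; split.
  move=> z zF; apply: contrapT => q_undef.
  have q0 j : q z j = 0 by apply: contrapT => /eqP qj; apply: q_undef; exists j.
  have zM j : (z j).1 * (z j).2 = 0.
    rewrite -(mul0r ((z j).1 * (z j).2)).
    by apply: (pair_mul_of_q zF.2.1 zF.2.1) => i; rewrite q0 mul0r.
  by have := sum_abs_eq1_of_pair_mul0 zF zM; lra.
move=> z w zF wF; split => [[lam [lam0 qE]] | [t [tT [lam [lam0 wE]]]]].
  pose s := sqrtC lam; have s2 : s ^+ 2 = lam := sqrtCK lam.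
  have s0 : s != 0 by rewrite sqrtC_eq0.
  have [t tT wE] : exists2 t, torus t & forall j, w j = act t (scalev s z) j.
    apply: (torus_act_of_pair_mul u_lt1 (in_fibre_scalev s0 zF) wF) => j.
    by rewrite (pair_mul_of_q zF.2.1 wF.2.1 qE) -s2 /=; ring.
  exists t; split => //; exists s; split => // j.
  by rewrite wE /act /= !(mulrCA s).
exists (lam ^+ 2); split; first by rewrite expf_neq0.
move=> j; rewrite /q !wE /act /=.
have tj0 : t (lift ord0 j) != 0 by rewrite -sqn_eq0 tT oner_eq0.
by field.
Qed.
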